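(* Let $\mathcal{G}=(\mathcal{V},\mathcal{E})$ be a graph with $V=|\mathcal{V}|$ vertices and $E=|\mathcal{E}|$ edges, and let $\epsilon>0$ and $\gamma\in(0,1)$. Consider the algorithm which, on input $w:\mathcal{E}\to\mathbb{R}^+$, samples independently for each edge $e$ a random variable $X_e\sim\mathrm{Lap}(1/\epsilon)$, sets $w'(e)=w(e)+X_e+(1/\epsilon)\ln(E/\gamma)$, and for each pair of vertices $x,y$ releases a minimum-weight path from $x$ to $y$ in $(\mathcal{G},w')$. With probability at least $1-\gamma$, for every pair of vertices $s,t$ (joined by some path) the released path $P$ satisfies $w(P)-d_w(s,t)\le(2V/\epsilon)\ln(E/\gamma)$.
   Context: $\mathrm{Lap}(b)$ is the Laplace distribution with density $\frac{1}{2b}e^{-|x|/b}$. The weight $w(P)$ of a path is the sum of the weights of its edges, and $d_w(s,t)$ is the minimum weight of a path from $s$ to $t$; $w(P)-d_w(s,t)$ is the approximation error of the path. *)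

From HB Require Import structures.
From mathcomp Require Import all_boot all_order all_algebra.
From mathcomp Require Import all_classical all_reals all_analysis.
Set Implicit Arguments. Unset Strict Implicit. Unset Printing Implicit Defensive.
Import Order.TTheory GRing.Theory Num.Theory.
Import numFieldNormedType.Exports.
Local Open Scope classical_set_scope.
Local Open Scope ring_scope.

Definition simple_graph (V E : finType) (src dst : E -> V) : Prop :=
  (forall e, src e != dst e) /\
  (forall e f, (src e == src f) && (dst e == dst f)
             || (src e == dst f) && (dst e == src f) -> e = f).

Definition joins (V E : finType) (src dst : E -> V) (e : E) (x y : V) : bool :=
  (src e == x) && (dst e == y) || (src e == y) && (dst e == x).

Fixpoint walk_ok (V E : finType) (src dst : E -> V) (es : seq E) (vs : seq V)
  : bool :=
  match es, vs with
  | [::], [:: _] => true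
  | e :: es', x :: ((y :: _) as vs') => joins src dst e x y && walk_ok src dst es' vs'
  | _, _ => false
  end.

Definition is_path (V E : finType) (src dst : E -> V) (s t : V) (p : seq E)
  : Prop :=
  exists vs : seq V,
    [/\ head s vs = s, last s vs = t, uniq vs & walk_ok src dst p vs].

Definition pweight (E : finType) (R : numDomainType) (w : E -> R) (p : seq E) : R :=
  \sum_(e <- p) w e.

Definition laplace_pdf (R : realType) (b : R) (x : R) : R :=
  (2 * b)^-1 * expR (- `|x| / b).

Definition is_laplace d (T : measurableType d) (R : realType)
    (P : probability T R) (b : R) (X : {RV P >-> R}) : Prop :=
  forall A : set R, measurable A ->
    P (X @^-1` A) = (\int[lebesgue_measure]_(x in A) (laplace_pdf b x)%:E)%E.

Definition mutually_independent d (T : measurableType d) (R : realType)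
    (P : probability T R) (I : finType) (X : I -> {RV P >-> R}) : Prop :=
  forall (S : {set I}) (B : I -> set R), (forall i, measurable (B i)) ->
    P [set om | forall i, i \in S -> B i (X i om)]
    = (\prod_(i in S) P (X i @^-1` B i))%E.

From HB Require Import structures.
From mathcomp Require Import all_boot all_order all_algebra.
From mathcomp Require Import all_classical all_reals all_analysis.
From mathcomp Require Import ring lra measurable_realfun.
Set Implicit Arguments. Unset Strict Implicit. Unset Printing Implicit Defensive.
Import Order.TTheory GRing.Theory Num.Theory.
Import numFieldNormedType.Exports.
Local Open Scope classical_set_scope.
Local Open Scope ring_scope.

(* Write [n = |E|] and [c = (1/eps) ln(n/gamma)].  A Lap(1/eps) variable lies
   in [[-c, c]] with probability [1 - exp(-eps c) = 1 - gamma/n], so by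
   independence and Bernoulli's inequality all the noises lie in [[-c, c]]
   with probability at least [(1 - gamma/n)^n >= 1 - gamma].  On that event
   [w <= w' <= w + 2c] edgewise, so the released path [p], being [w']-minimal,
   satisfies [w(p) <= w'(p) <= w'(q) <= w(q) + 2c |q|] for every path [q],
   and a simple path has fewer than [|V|] edges. *)

Lemma is_derive_scaled_expR (R : realType) (c k x : R) : k != 0 ->
  is_derive x 1 (fun y : R => c / k * expR (k * y)) (c * expR (k * x)).
Proof.
move=> k0; apply: is_derive_eq.
by rewrite /GRing.scale /= mulr1 mulrCA -!mulrA mulVf // mulr1 mulrC.
Qed.

Lemma continuous_scaled_expR (R : realType) (c k : R) :
  continuous (fun y : R => c * expR (k * y)).
Proof.
move=> z; apply: cvgM; first exact: cvg_cst.
apply: continuous_comp; last exact: continuous_expR.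
by apply: cvgM; [exact: cvg_cst | exact: cvg_id].
Qed.

Lemma integral_itv_scaled_expR (R : realType) (c k a b : R) : k != 0 -> a < b ->
  (\int[lebesgue_measure]_(x in `[a, b]) (c * expR (k * x))%:E
   = (c / k * expR (k * b))%:E - (c / k * expR (k * a))%:E)%E.
Proof.
move=> k0 ab.
apply: (@continuous_FTC2 _ _ (fun y : R => c / k * expR (k * y))) => //.
- by apply: continuous_subspaceT; exact: continuous_scaled_expR.
- split.
  + by move=> z _; apply: ex_derive; exact: is_derive_scaled_expR.
  + by apply/cvg_at_right_filter; exact: continuous_scaled_expR.
  + by apply/cvg_at_left_filter; exact: continuous_scaled_expR.
- by move=> z _; rewrite derive1E; apply: derive_val; exact: is_derive_scaled_expR.
Qed.

Lemma measurable_laplace_pdf (R : realType) (b : R) (D : set R) :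
  measurable_fun D (EFin \o laplace_pdf b).
Proof.
apply/measurable_EFinP; apply: measurable_funTS; apply: continuous_measurable_fun.
move=> x; apply: cvgM; first exact: cvg_cst.
apply: continuous_comp; last exact: continuous_expR.
apply: cvgM; last exact: cvg_cst.
by apply: cvgN; exact: norm_continuous.
Qed.

Lemma laplace_pdf_ge0 (R : realType) (b x : R) : 0 <= b -> 0 <= laplace_pdf b x.
Proof.
by move=> b0; rewrite /laplace_pdf mulr_ge0 ?expR_ge0 // invr_ge0 mulr_ge0.
Qed.

Lemma laplace_integral_sym_itv (R : realType) (e s : R) : 0 < e -> 0 < s ->
  (\int[lebesgue_measure]_(x in `[(- s)%R, s]) (laplace_pdf e^-1 x)%:E
   = (1 - expR (- (e * s)))%:E)%E.
Proof.
move=> e0 s0; have e_neq0 : e != 0 by rewrite gt_eqF.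
rewrite (@itv_bndbnd_setU _ _ (BLeft (- s)) (BLeft 0) (BRight s)); last 2 first.
- by rewrite bnd_simp; lra.
- by rewrite bnd_simp; lra.
rewrite ge0_integral_setU //=; last 3 first.
- exact: measurable_laplace_pdf.
- by move=> x _; rewrite lee_fin laplace_pdf_ge0 // invr_ge0 ltW.
- rewrite disj_set2E; apply/eqP; apply/seteqP; split => x //=.
  by rewrite !in_itv /= => -[/andP[_ ?] /andP[? _]]; lra.
rewrite integral_itv_bndo_bndc; last exact: measurable_laplace_pdf.
have -> : (\int[lebesgue_measure]_(x in `[(- s)%R, 0%R]) (laplace_pdf e^-1 x)%:E
   = \int[lebesgue_measure]_(x in `[(- s)%R, 0%R]) (e / 2 * expR (e * x))%:E)%E.
  apply: eq_integral => x; rewrite inE /= in_itv /= => /andP[_ x0].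
  by rewrite /laplace_pdf ler0_norm // invfM invrK opprK (mulrC x) (mulrC 2^-1).
have -> : (\int[lebesgue_measure]_(x in `[0%R, s]) (laplace_pdf e^-1 x)%:E
   = \int[lebesgue_measure]_(x in `[0%R, s]) (e / 2 * expR (- e * x))%:E)%E.
  apply: eq_integral => x; rewrite inE /= in_itv /= => /andP[x0 _].
  by rewrite /laplace_pdf ger0_norm // invfM invrK mulNr (mulrC x) (mulrC 2^-1) mulNr.
rewrite !integral_itv_scaled_expR ?oppr_eq0 //; last by lra.
rewrite -!EFinB -EFinD; congr EFin.
by rewrite !mulr0 expR0 mulNr mulrN; field.
Qed.

Lemma laplace_prob_sym_itv d (T : measurableType d) (R : realType)
    (P : probability T R) (e s : R) (Y : {RV P >-> R}) :
  0 < e -> 0 < s -> is_laplace e^-1 Y ->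
  P (Y @^-1` `[(- s)%R, s]) = (1 - expR (- (e * s)))%:E.
Proof.
by move=> e0 s0 lapY; rewrite lapY ?laplace_integral_sym_itv //; exact: measurable_itv.
Qed.

Lemma bernoulli_ineq (R : realFieldType) (x : R) (n : nat) : 0 <= x <= 1 ->
  1 - n%:R * x <= (1 - x) ^+ n.
Proof.
move=> /andP[x0 x1]; elim: n => [|n IH]; first by rewrite expr0 mul0r subr0.
rewrite exprS -natr1.
have x1' : 0 <= 1 - x by lra.
have IH' : 0 <= (1 - x) ^+ n - (1 - n%:R * x) by rewrite subr_ge0.
have := mulr_ge0 x1' IH'; have := mulr_ge0 (ler0n R n) (mulr_ge0 x0 x0).
by set y := (1 - x) ^+ n; nra.
Qed.

Lemma natr_mul_div_le (R : numFieldType) (n : nat) (x : R) :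
  0 <= x -> n%:R * (x / n%:R) <= x.
Proof.
move=> x0; have [->|n0] := posnP n; first by rewrite mul0r.
by rewrite mulrCA mulfV ?mulr1 // pnatr_eq0 -lt0n.
Qed.

Section IndependentEvents.
Variables (d : measure_display) (T : measurableType d) (R : realType).
Variables (P : probability T R) (I : finType) (X : I -> {RV P >-> R}).

Lemma measurable_all_preimage (B : set R) : measurable B ->
  measurable [set om | forall i, B (X i om)].
Proof.
move=> mB; have -> : [set om | forall i, B (X i om)]
    = \bigcap_(i in [set: I]) (X i @^-1` B).
  by apply/seteqP; split => om /= H i; [move=> _|]; exact: H.
apply: fin_bigcap_measurable; first exact: finite_finset.
by move=> i _; exact: measurable_funPTI.
Qed.

(* Independence turns the probability into [(1 - a)^|I|]. *)
Lemma independent_all_preimage_ge (B : set R) (a : R) :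
  mutually_independent X -> measurable B -> 0 <= a <= 1 ->
  (forall i, P (X i @^-1` B) = (1 - a)%:E) ->
  ((1 - #|I|%:R * a)%:E <= P [set om | forall i, B (X i om)])%E.
Proof.
move=> indX mB a01 PB.
have -> : [set om | forall i, B (X i om)]
    = [set om | forall i, i \in [set: I]%SET -> B (X i om)].
  by apply/seteqP; split => om /= H i // ; apply: H; rewrite inE.
rewrite (indX _ (fun=> B)) // (eq_bigr _ (fun i _ => PB i)).
by rewrite prodEFin prodr_const cardsT lee_fin bernoulli_ineq.
Qed.

End IndependentEvents.

Lemma walk_ok_size (V E : finType) (src dst : E -> V) es vs :
  walk_ok src dst es vs -> size vs = (size es).+1.
Proof.
elim: es vs => [|e es IH] [|x [|y vs]] //= /andP[_ H].
by move: (IH _ H) => /= ->.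
Qed.

Lemma is_path_size_lt (V E : finType) (src dst : E -> V) s t q :
  is_path src dst s t q -> (size q < #|V|)%N.
Proof.
case=> vs [_ _ uniq_vs walk_vs].
by rewrite -(walk_ok_size walk_vs) -(card_uniqP uniq_vs) max_card.
Qed.

Lemma pweight_le_add_size (E : finType) (R : realDomainType) (a b : E -> R) c q :
  (forall e, a e <= b e + c) -> pweight a q <= pweight b q + (size q)%:R * c.
Proof.
move=> H; elim: q => [|e q IH]; first by rewrite /pweight !big_nil mul0r addr0.
rewrite /pweight !big_cons -natr1 -/(pweight a q) -/(pweight b q).
by have := H e; lra.
Qed.

Lemma pweight_sub_le_of_perturbed_min (E : finType) (R : realDomainType)
    (w w' : E -> R) (c : R) (p q : seq E) :
  (forall e, w e <= w' e <= w e + c) -> pweight w' p <= pweight w' q ->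
  pweight w p - pweight w q <= (size q)%:R * c.
Proof.
move=> ww' min_p.
have lo : pweight w p <= pweight w' p.
  by apply: ler_sum => e _; have /andP[] := ww' e.
have hi := pweight_le_add_size q (fun e => proj2 (andP (ww' e))).
lra.
Qed.

Theorem corollary5p6
  (V E : finType) (src dst : E -> V) (Hgraph : simple_graph src dst)
  (R : realType) (eps gamma : R) (Heps : 0 < eps)
  (Hgamma : 0 < gamma < 1)
  (w : E -> R) (Hw : forall e, 0 < w e)
  (d : measure_display) (T : measurableType d) (P : probability T R)
  (X : E -> {RV P >-> R})
  (Hind : mutually_independent X)
  (Hlap : forall e, is_laplace eps^-1 (X e)) :
  let shift := eps^-1 * ln (#|E|%:R / gamma) in
  let w' := fun (om : T) (e : E) => w e + X e om + shift in
  exists A : set T,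
    [/\ measurable A, (P A >= (1 - gamma)%:E)%E &
        forall om, A om ->
        forall (s t : V) (p : seq E),
          is_path src dst s t p ->
          (forall q, is_path src dst s t q ->
             pweight (w' om) p <= pweight (w' om) q) ->
          forall q, is_path src dst s t q ->
            pweight w p - pweight w q
              <= 2 * #|V|%:R / eps * ln (#|E|%:R / gamma)].
Proof.
move=> shift w'; case/andP: Hgamma => gamma0 gamma1; set n := #|E|.
have n_ge1 : (0 < n)%N -> 1 < n%:R / gamma.
  by move=> n0; rewrite ltr_pdivlMr // mul1r (lt_le_trans gamma1) // ler1n.
have shift0 : 0 <= shift.
  rewrite /shift -/n mulr_ge0 ?invr_ge0 ?(ltW Heps) //.
  have [->|/n_ge1/ltW] := posnP n; last exact: ln_ge0.
  by rewrite mul0r ln0.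
exists [set om | forall e, `[(- shift)%R, shift]%classic (X e om)]; split.
- by apply: measurable_all_preimage; exact: measurable_itv.
- have a01 : 0 <= gamma / n%:R <= 1.
    rewrite divr_ge0 ?(ltW gamma0) //=.
    have [->|/n_ge1/ltW ge1] := posnP n; first by rewrite invr0 mulr0.
    by rewrite -invf_div invf_le1 // (lt_le_trans ltr01 ge1).
  apply: le_trans (independent_all_preimage_ge Hind (measurable_itv _) a01 _).
    by rewrite lee_fin lerD2l lerN2 natr_mul_div_le ?ltW.
  move=> e; have n0 : (0 < n)%N by apply/card_gt0P; exists e.
  rewrite (laplace_prob_sym_itv Heps) //; last by rewrite mulr_gt0 ?invr_gt0 ?ln_gt0 ?n_ge1.
  rewrite mulrA mulfV ?gt_eqF // mul1r expRN lnK ?invf_div //.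
  by rewrite posrE (lt_trans ltr01) ?n_ge1.
- move=> om noise_le s t p _ min_p q path_q.
  have w_le_w' e : w e <= w' om e <= w e + 2 * shift.
    by have := noise_le e; rewrite /= in_itv /= /w'; lra.
  apply: le_trans (pweight_sub_le_of_perturbed_min w_le_w' (min_p q path_q)) _.
  have -> : 2 * #|V|%:R / eps * ln (n%:R / gamma) = #|V|%:R * (2 * shift).
    by rewrite /shift; field; rewrite gt_eqF.
  apply: ler_wpM2r; first by rewrite mulr_ge0.
  by rewrite ler_nat ltnW // (is_path_size_lt path_q).
Qed.
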